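(* Let $a\in C^2([0,T]\times[-\pi,\pi])$ solve $$\partial_t a+\Big(\int_{-\pi}^x a(t,\bar x)\,d\bar x\Big)\partial_x a-a^2+\frac1\pi\int_{-\pi}^{\pi}a^2\,dx=0,\qquad \int_{-\pi}^\pi a(t,x)dx=0,$$ and set $a_0=a(0,\cdot)$. Assume $\partial_x a_0(x_0^* )=0$ at some point $x_0^*$. Then for all $t\in[0,T]$, $\partial_x^2a(t,x^*(t))=\partial_x^2a_0(x_0^* )$, where $x^*$ is the characteristic starting from $x_0^*$.
   Context: The characteristic starting from $x_0^*$ is the solution of $\frac{d}{dt}x^*(t)=\int_{-\pi}^{x^*(t)}a(t,x)\,dx$, $x^*(0)=x_0^*$. *)

From Stdlib Require Import Reals.
From Coquelicot Require Import Coquelicot.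
Open Scope R_scope.

Definition Icc (lo hi : R) (x : R) : Prop := lo <= x <= hi.

Definition Rect (T : R) (p : R * R) : Prop :=
  0 <= fst p <= T /\ - PI <= snd p <= PI.

(* f has derivative l at x relative to the set D (one-sided at endpoints
   of a closed interval): the difference quotient tends to l as y -> x
   with y in D, y <> x. *)
Definition is_derive_in (D : R -> Prop) (f : R -> R) (x l : R) : Prop :=
  filterlim (fun y => (f y - f x) / (y - x))
    (within (fun y => D y /\ y <> x) (locally x)) (locally l).

Definition cont_on2 (D : R * R -> Prop) (f : R -> R -> R) : Prop :=
  forall p, D p ->
    filterlim (fun q : R * R => f (fst q) (snd q)) (within D (locally p))
      (locally (f (fst p) (snd p))).

(* a is C^2 on the closed rectangle [0,T] x [-pi,pi], with partial derivatives
   a_t = at, a_x = ax, (a_t)_t = att, (a_t)_x = atx, (a_x)_t = axt,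
   (a_x)_x = axx, all continuous up to the boundary (derivatives taken
   relative to the closed rectangle). *)
Definition C2_rect (T : R) (a at_ ax att atx axt axx : R -> R -> R) : Prop :=
  cont_on2 (Rect T) a /\ cont_on2 (Rect T) at_ /\ cont_on2 (Rect T) ax /\
  cont_on2 (Rect T) att /\ cont_on2 (Rect T) atx /\
  cont_on2 (Rect T) axt /\ cont_on2 (Rect T) axx /\
  (forall t x, Rect T (t, x) ->
     is_derive_in (Icc 0 T) (fun s => a s x) t (at_ t x) /\
     is_derive_in (Icc (- PI) PI) (fun y => a t y) x (ax t x) /\
     is_derive_in (Icc 0 T) (fun s => at_ s x) t (att t x) /\
     is_derive_in (Icc (- PI) PI) (fun y => at_ t y) x (atx t x) /\
     is_derive_in (Icc 0 T) (fun s => ax s x) t (axt t x) /\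
     is_derive_in (Icc (- PI) PI) (fun y => ax t y) x (axx t x)).

(* Differentiating the equation in x and using a_tx = a_xt, the derivative of
   a_x along the characteristic is a * a_x, so a_x(t, x*(t)) = 0 by Gronwall.
   One more x-derivative would formally give d/dt a_xx(t, x*(t)) = a_x^2 = 0,
   but a is only C^2.  Instead follow g_h(t) = a_x(t, x*(t) + h) ~ h a_xx: its
   time derivative a a_x - (int_{x*}^{x*+h} a) a_xx at x* + h is o(h) uniformly
   in t, so |a_xx(t, x*(t)) - a_xx(0, x0)| is arbitrarily small.  The shift h
   has a fixed sign keeping x* + h inside [-pi, pi]: by zero mean the velocity
   vanishes at both ends, so by Gronwall the characteristic stays uniformly away
   from any end it does not start at. *)

From Stdlib Require Import Reals Lra Lia Classical ClassicalEpsilon.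
From Coquelicot Require Import Coquelicot.
Open Scope R_scope.

(** * One-sided calculus on a closed interval *)

Definition lim_in (lo hi : R) (f : R -> R) (x l : R) : Prop :=
  forall eps, 0 < eps -> exists d, 0 < d /\
    forall y, lo <= y <= hi -> y <> x -> Rabs (y - x) < d -> Rabs (f y - l) < eps.

Definition der_in (lo hi : R) (f : R -> R) (x l : R) : Prop :=
  lim_in lo hi (fun y => (f y - f x) / (y - x)) x l.

Lemma lim_in_filterlim lo hi f x l :
  lim_in lo hi f x l <->
  filterlim f (within (fun y => Icc lo hi y /\ y <> x) (locally x)) (locally l).
Proof.
split.
- intros H P [eps HP]. destruct (H eps (cond_pos eps)) as [d [Hd Hf]].
  exists (mkposreal d Hd). intros y Hy [Hy1 Hy2]. apply HP, Hf; auto.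
- intros H eps He.
  destruct (H (fun z => Rabs (z - l) < eps)) as [d Hd].
  + exists (mkposreal eps He). auto.
  + exists d. split; [apply cond_pos|]. intros y Hy Hyx Hyd. apply (Hd y); auto.
Qed.

Lemma is_derive_in_der_in lo hi f x l : is_derive_in (Icc lo hi) f x l <-> der_in lo hi f x l.
Proof. unfold der_in. rewrite lim_in_filterlim. reflexivity. Qed.

Lemma lim_in_ext lo hi f g x l : (forall y, lo <= y <= hi -> y <> x -> f y = g y) ->
  lim_in lo hi f x l -> lim_in lo hi g x l.
Proof.
intros E H e He. destruct (H e He) as [d [Hd Hf]]. exists d. split; auto.
intros y Hy Hyx Hyd. rewrite <- E; auto.
Qed.

Lemma lim_in_const lo hi c x : lim_in lo hi (fun _ => c) x c.
Proof. intros e He. exists 1. split; [lra|]. intros. rewrite Rminus_eq_0, Rabs_R0. lra. Qed.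

Lemma lim_in_id lo hi x : lim_in lo hi (fun y => y) x x.
Proof. intros e He. exists e. auto. Qed.

Lemma lim_in_plus lo hi f g x l m : lim_in lo hi f x l -> lim_in lo hi g x m ->
  lim_in lo hi (fun y => f y + g y) x (l + m).
Proof.
rewrite !lim_in_filterlim. intros Hf Hg.
apply (filterlim_comp_2 f g Rplus Hf Hg), (@filterlim_plus R_AbsRing R_NormedModule).
Qed.

Lemma lim_in_mult lo hi f g x l m : lim_in lo hi f x l -> lim_in lo hi g x m ->
  lim_in lo hi (fun y => f y * g y) x (l * m).
Proof.
rewrite !lim_in_filterlim. intros Hf Hg.
apply (filterlim_comp_2 f g Rmult Hf Hg), (@filterlim_mult R_AbsRing).
Qed.

Lemma lim_in_opp lo hi f x l : lim_in lo hi f x l -> lim_in lo hi (fun y => - f y) x (- l).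
Proof.
intros H e He. destruct (H e He) as [d [Hd Hf]]. exists d. split; auto.
intros y Hy Hyx Hyd. replace (- f y - - l) with (- (f y - l)) by ring.
rewrite Rabs_Ropp. auto.
Qed.

Lemma lim_in_minus lo hi f g x l m : lim_in lo hi f x l -> lim_in lo hi g x m ->
  lim_in lo hi (fun y => f y - g y) x (l - m).
Proof. intros. apply lim_in_plus, lim_in_opp; auto. Qed.

Lemma lim_in_dominated lo hi f g x l m :
  (forall y, lo <= y <= hi -> y <> x -> Rabs (f y - l) <= Rabs (g y - m)) ->
  lim_in lo hi g x m -> lim_in lo hi f x l.
Proof.
intros Hfg H e He. destruct (H e He) as [d [Hd Hg]]. exists d. split; auto.
intros y Hy Hyx Hyd. eapply Rle_lt_trans; [apply Hfg|apply Hg]; auto.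
Qed.

Lemma exists_near_in lo hi x d : lo < hi -> lo <= x <= hi -> 0 < d ->
  exists y, lo <= y <= hi /\ y <> x /\ Rabs (y - x) < d.
Proof.
intros Hlh Hx Hd. destruct (Rlt_or_le x hi) as [L|L].
- set (k := Rmin d (hi - x)).
  assert (0 < k /\ k <= d /\ k <= hi - x)
    by (unfold k; repeat split; [apply Rmin_pos|apply Rmin_l|apply Rmin_r]; lra).
  exists (x + k / 2). repeat split; try lra. rewrite Rabs_pos_eq; lra.
- set (k := Rmin d (x - lo)).
  assert (0 < k /\ k <= d /\ k <= x - lo)
    by (unfold k; repeat split; [apply Rmin_pos|apply Rmin_l|apply Rmin_r]; lra).
  exists (x - k / 2). repeat split; try lra. rewrite Rabs_left; lra.
Qed.

Lemma lim_in_unique lo hi f x l m : lo < hi -> lo <= x <= hi ->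
  lim_in lo hi f x l -> lim_in lo hi f x m -> l = m.
Proof.
intros Hlh Hx Hl Hm. apply NNPP. intro N.
assert (He : 0 < Rabs (l - m) / 2) by (apply Rdiv_lt_0_compat; [apply Rabs_pos_lt|]; lra).
destruct (Hl _ He) as [d1 [Hd1 H1]]. destruct (Hm _ He) as [d2 [Hd2 H2]].
destruct (exists_near_in lo hi x (Rmin d1 d2)) as [y [Hy [Hyx Hyd]]]; auto.
{ apply Rmin_pos; auto. }
assert (Rmin d1 d2 <= d1) by apply Rmin_l. assert (Rmin d1 d2 <= d2) by apply Rmin_r.
specialize (H1 y Hy Hyx ltac:(lra)). specialize (H2 y Hy Hyx ltac:(lra)).
assert (Rabs (l - m) <= Rabs (f y - l) + Rabs (f y - m)).
{ replace (l - m) with (- (f y - l) + (f y - m)) by ring.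
  eapply Rle_trans; [apply Rabs_triang|]. rewrite Rabs_Ropp. lra. }
lra.
Qed.

Lemma der_in_unique lo hi f x l m : lo < hi -> lo <= x <= hi ->
  der_in lo hi f x l -> der_in lo hi f x m -> l = m.
Proof. apply lim_in_unique. Qed.

Lemma der_in_ext lo hi f g x l : lo <= x <= hi -> (forall y, lo <= y <= hi -> f y = g y) ->
  der_in lo hi f x l -> der_in lo hi g x l.
Proof.
intros Hx E. apply lim_in_ext. intros y Hy _. rewrite !E; auto.
Qed.

Lemma der_in_lim lo hi f x l : der_in lo hi f x l -> lim_in lo hi f x (f x).
Proof.
intros H.
assert (L : lim_in lo hi (fun y => f x + (y - x) * ((f y - f x) / (y - x))) x (f x + (x - x) * l)).
{ apply lim_in_plus, lim_in_mult, H; [apply lim_in_const|].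
  apply lim_in_minus; [apply lim_in_id|apply lim_in_const]. }
replace (f x + (x - x) * l) with (f x) in L by ring.
revert L. apply lim_in_ext. intros y _ Hy. simpl. field. lra.
Qed.

Lemma der_in_const lo hi c x : der_in lo hi (fun _ => c) x 0.
Proof.
eapply lim_in_ext; [|apply (lim_in_const lo hi 0 x)].
intros y _ Hy. simpl. field. lra.
Qed.

Lemma der_in_plus lo hi f g x l m : der_in lo hi f x l -> der_in lo hi g x m ->
  der_in lo hi (fun y => f y + g y) x (l + m).
Proof.
intros Hf Hg. eapply lim_in_ext; [|apply (lim_in_plus _ _ _ _ _ _ _ Hf Hg)].
intros y _ Hy. simpl. field. lra.
Qed.

Lemma der_in_minus lo hi f g x l m : der_in lo hi f x l -> der_in lo hi g x m ->
  der_in lo hi (fun y => f y - g y) x (l - m).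
Proof.
intros Hf Hg. eapply lim_in_ext; [|apply (lim_in_minus _ _ _ _ _ _ _ Hf Hg)].
intros y _ Hy. simpl. field. lra.
Qed.

Lemma der_in_mult lo hi f g x l m : der_in lo hi f x l -> der_in lo hi g x m ->
  der_in lo hi (fun y => f y * g y) x (f x * m + g x * l).
Proof.
intros Hf Hg.
eapply lim_in_ext; [|apply (lim_in_plus _ _ _ _ _ _ _
  (lim_in_mult _ _ _ _ _ _ _ (der_in_lim _ _ _ _ _ Hf) Hg)
  (lim_in_mult _ _ _ _ _ _ _ (lim_in_const lo hi (g x) x) Hf))].
intros y _ Hy. simpl. field. lra.
Qed.

Lemma der_in_of_derivable lo hi f x l : derivable_pt_lim f x l -> der_in lo hi f x l.
Proof.
intros H e He. destruct (H e He) as [d Hd]. exists d. split; [apply cond_pos|].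
intros y _ Hy Hyd. specialize (Hd (y - x) ltac:(lra) Hyd).
replace (x + (y - x)) with y in Hd by ring. exact Hd.
Qed.

Definition clamp (m M z : R) : R := Rmax m (Rmin M z).

Lemma clamp_in m M z : m <= M -> m <= clamp m M z <= M.
Proof. unfold clamp, Rmax, Rmin. repeat destruct Rle_dec; lra. Qed.

Lemma clamp_id m M z : m <= z <= M -> clamp m M z = z.
Proof. unfold clamp, Rmax, Rmin. repeat destruct Rle_dec; lra. Qed.

Lemma clamp_lipschitz m M y z : Rabs (clamp m M y - clamp m M z) <= Rabs (y - z).
Proof. unfold clamp, Rmax, Rmin. repeat destruct Rle_dec; split_Rabs; lra. Qed.

Lemma between_in lo hi u v z : lo <= u <= hi -> lo <= v <= hi ->
  Rmin u v <= z <= Rmax u v -> lo <= z <= hi.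
Proof. unfold Rmin, Rmax. destruct Rle_dec; lra. Qed.

Lemma between_dist u v z : Rmin u v <= z <= Rmax u v -> Rabs (z - u) <= Rabs (v - u).
Proof. unfold Rmin, Rmax. destruct Rle_dec; split_Rabs; lra. Qed.

(* Coquelicot's [MVT_gen] needs two-sided derivatives and continuity; both hold
   for [f] clamped to the segment [u, v], which agrees with [f] there. *)
Lemma der_in_MVT lo hi f df u v : lo <= u <= hi -> lo <= v <= hi ->
  (forall z, Rmin u v <= z <= Rmax u v -> der_in lo hi f z (df z)) ->
  exists c, Rmin u v <= c <= Rmax u v /\ f v - f u = df c * (v - u).
Proof.
intros Hu Hv Hd.
set (m := Rmin u v) in *. set (M := Rmax u v) in *.
assert (HmM : m <= M) by (unfold m, M, Rmin, Rmax; destruct Rle_dec; lra).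
assert (Hseg : forall z, m <= z <= M -> lo <= z <= hi) by (intros z Hz; apply (between_in lo hi u v z); auto).
set (g := fun z => f (clamp m M z)).
assert (Eg : forall z, m <= z <= M -> g z = f z) by (intros; unfold g; rewrite clamp_id; auto).
destruct (MVT_gen g u v df) as [c [Hc Ec]].
- intros z Hz. change (m < z < M) in Hz. apply is_derive_Reals. intros e He.
  destruct (Hd z ltac:(lra) e He) as [d [Hd0 Hd1]].
  assert (Hk : 0 < Rmin d (Rmin (z - m) (M - z))) by (repeat apply Rmin_pos; lra).
  exists (mkposreal _ Hk). simpl. intros h Hh0 Hh.
  assert (Rmin d (Rmin (z - m) (M - z)) <= d) by apply Rmin_l.
  assert (Rmin d (Rmin (z - m) (M - z)) <= Rmin (z - m) (M - z)) by apply Rmin_r.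
  assert (Rmin (z - m) (M - z) <= z - m) by apply Rmin_l.
  assert (Rmin (z - m) (M - z) <= M - z) by apply Rmin_r.
  assert (- Rabs h <= h <= Rabs h) by (split_Rabs; lra).
  rewrite !Eg by lra.
  specialize (Hd1 (z + h) ltac:(apply Hseg; lra) ltac:(lra)).
  replace (z + h - z) with h in Hd1 by ring. apply Hd1. lra.
- intros z Hz. change (m <= z <= M) in Hz. apply continuity_pt_filterlim. intros P [e HP].
  destruct (der_in_lim _ _ _ _ _ (Hd z Hz) e (cond_pos e)) as [d [Hd0 Hd1]].
  exists (mkposreal d Hd0). intros y Hy. apply HP. change (Rabs (g y - g z) < e).
  assert (Hy' : Rabs (y - z) < d) by exact Hy.
  assert (Hcl := clamp_lipschitz m M y z). rewrite (clamp_id m M z Hz) in Hcl. assert (Hin := clamp_in m M y HmM).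
  rewrite (Eg z Hz). unfold g.
  destruct (Req_dec (clamp m M y) z) as [E|N].
  + rewrite E, Rminus_eq_0, Rabs_R0. apply cond_pos.
  + apply Hd1; auto; lra.
- change (m <= c <= M) in Hc. exists c. split; auto.
  rewrite <- (Eg u), <- (Eg v) by (unfold m, M, Rmin, Rmax; destruct Rle_dec; lra).
  exact Ec.
Qed.

Lemma der_in_nonneg_incr lo hi g dg u v : lo <= u -> u <= v -> v <= hi ->
  (forall z, u <= z <= v -> der_in lo hi g z (dg z)) ->
  (forall z, u <= z <= v -> 0 <= dg z) -> g u <= g v.
Proof.
intros Hu Huv Hv Hd Hpos.
destruct (der_in_MVT lo hi g dg u v) as [c [Hc E]]; try lra.
{ rewrite Rmin_left, Rmax_right by lra. auto. }
rewrite Rmin_left, Rmax_right in Hc by lra.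
specialize (Hpos c Hc). nra.
Qed.

Definition cont_in (lo hi : R) (f : R -> R) : Prop :=
  forall x, lo <= x <= hi -> forall eps, 0 < eps -> exists d, 0 < d /\
    forall y, lo <= y <= hi -> Rabs (y - x) < d -> Rabs (f y - f x) < eps.

Lemma ex_RInt_cont_in lo hi f u v : lo <= hi -> cont_in lo hi f ->
  lo <= u <= hi -> lo <= v <= hi -> ex_RInt f u v.
Proof.
intros Hlh Hf Hu Hv.
apply (ex_RInt_ext (fun z => f (clamp lo hi z))).
{ intros z Hz. rewrite clamp_id; auto.
  apply (between_in lo hi u v z); auto. unfold Rmin, Rmax in *. destruct Rle_dec; lra. }
apply (@ex_RInt_continuous R_CompleteNormedModule). intros z _ P [e HP].
assert (Hz := clamp_in lo hi z Hlh).
destruct (Hf _ Hz e (cond_pos e)) as [d [Hd Hfd]].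
exists (mkposreal d Hd). intros y Hy. apply HP. change (Rabs (f (clamp lo hi y) - f (clamp lo hi z)) < e).
assert (Hcl := clamp_lipschitz lo hi y z).
assert (Hy' : Rabs (y - z) < d) by exact Hy.
apply Hfd; [apply clamp_in; auto|lra].
Qed.

Lemma RInt_sub_const_le lo hi f u v c e : lo <= hi -> cont_in lo hi f ->
  lo <= u <= hi -> lo <= v <= hi ->
  (forall z, Rmin u v <= z <= Rmax u v -> Rabs (f z - c) <= e) ->
  Rabs (RInt f u v - (v - u) * c) <= Rabs (v - u) * e.
Proof.
intros Hlh Hf.
assert (K : forall p q, lo <= p <= hi -> lo <= q <= hi -> p <= q ->
  (forall z, p <= z <= q -> Rabs (f z - c) <= e) ->
  Rabs (RInt f p q - (q - p) * c) <= (q - p) * e).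
{ intros p q Hp Hq Hpq Hb.
  assert (Ex : ex_RInt f p q) by (apply (ex_RInt_cont_in lo hi); auto).
  replace (RInt f p q - (q - p) * c) with (RInt (fun z => f z - c) p q).
  - apply abs_RInt_le_const; auto. apply (ex_RInt_minus f (fun _ => c)); auto.
    apply ex_RInt_const.
  - rewrite (RInt_minus f (fun _ => c)); auto; [|apply ex_RInt_const].
    rewrite RInt_const. reflexivity. }
intros Hu Hv Hb. destruct (Rle_or_lt u v) as [L|L].
- rewrite Rmin_left, Rmax_right in Hb by lra. rewrite (Rabs_pos_eq (v - u)) by lra. apply K; auto.
- rewrite Rmin_right, Rmax_left in Hb by lra.
  rewrite <- opp_RInt_swap by (apply (ex_RInt_cont_in lo hi); auto).
  replace (opp (RInt f v u) - (v - u) * c) with (- (RInt f v u - (u - v) * c))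
    by (unfold opp; simpl; ring).
  rewrite Rabs_Ropp, (Rabs_left (v - u)) by lra. replace (- (v - u)) with (u - v) by ring.
  apply K; auto; lra.
Qed.

Lemma RInt_sub_lower lo hi f u v : lo <= hi -> cont_in lo hi f ->
  lo <= u <= hi -> lo <= v <= hi -> RInt f lo v - RInt f lo u = RInt f u v.
Proof.
intros. rewrite <- (RInt_Chasles f lo u v).
- unfold plus; simpl; ring.
- apply (ex_RInt_cont_in lo hi); auto; lra.
- apply (ex_RInt_cont_in lo hi); auto.
Qed.

Lemma der_in_RInt lo hi f x : lo <= hi -> cont_in lo hi f -> lo <= x <= hi ->
  der_in lo hi (fun y => RInt f lo y) x (f x).
Proof.
intros Hlh Hf Hx e He.
destruct (Hf x Hx (e / 2) ltac:(lra)) as [d [Hd Hfd]].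
exists d. split; auto. intros y Hy Hyx Hyd.
rewrite (RInt_sub_lower lo hi f x y) by auto.
assert (B : Rabs (RInt f x y - (y - x) * f x) <= Rabs (y - x) * (e / 2)).
{ apply (RInt_sub_const_le lo hi); auto. intros z Hz. apply Rlt_le, Hfd.
  - apply (between_in lo hi x y z); auto.
  - assert (Rabs (z - x) <= Rabs (y - x)) by (apply between_dist; auto). lra. }
assert (0 < Rabs (y - x)) by (apply Rabs_pos_lt; lra).
replace (RInt f x y / (y - x) - f x) with ((RInt f x y - (y - x) * f x) / (y - x)) by (field; lra).
unfold Rdiv. rewrite Rabs_mult, Rabs_inv.
apply (Rmult_lt_reg_r (Rabs (y - x))); auto.
rewrite Rmult_assoc, Rinv_l by lra. nra.
Qed.

Lemma RInt_zero_mean_bound lo hi f M x : lo <= x <= hi -> cont_in lo hi f ->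
  (forall z, lo <= z <= hi -> Rabs (f z) <= M) -> RInt f lo hi = 0 ->
  Rabs (RInt f lo x) <= M * (hi - x) /\ Rabs (RInt f lo x) <= M * (x - lo).
Proof.
intros Hx Hf HM Hmean.
assert (Hb : forall u v, lo <= u <= v -> v <= hi -> Rabs (RInt f u v) <= M * (v - u)).
{ intros u v Huv Hv.
  assert (B := RInt_sub_const_le lo hi f u v 0 M ltac:(lra) Hf ltac:(lra) ltac:(lra)).
  rewrite Rmult_0_r, Rminus_0_r, (Rabs_pos_eq (v - u)) in B by lra. rewrite Rmult_comm. apply B.
  intros z Hz. rewrite Rminus_0_r. apply HM. apply (between_in lo hi u v z); auto; lra. }
split.
- rewrite <- Rabs_Ropp, <- Rminus_0_l, <- Hmean, (RInt_sub_lower lo hi) by (auto; lra).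
  apply Hb; lra.
- apply Hb; lra.
Qed.

Lemma Rabs_mult_le x y X Y : Rabs x <= X -> Rabs y <= Y -> Rabs (x * y) <= X * Y.
Proof. intros. rewrite Rabs_mult. apply Rmult_le_compat; auto; apply Rabs_pos. Qed.

Lemma abs_le_of_sq_le x y : 0 <= y -> x * x <= y * y -> Rabs x <= y.
Proof. intros. split_Rabs; nra. Qed.

Lemma der_in_weighted_square lo hi f c s l : der_in lo hi f s l ->
  der_in lo hi (fun y => f y * f y * exp (c * y)) s
    (exp (c * s) * (2 * f s * l + c * (f s * f s))).
Proof.
intros Hf.
replace (exp (c * s) * (2 * f s * l + c * (f s * f s)))
  with (f s * f s * (c * exp (c * s)) + exp (c * s) * (f s * l + f s * l)) by ring.
apply (der_in_mult lo hi (fun y => f y * f y) (fun y => exp (c * y)));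
  [apply der_in_mult; auto|].
apply der_in_of_derivable, is_derive_Reals. auto_derive; [auto|ring].
Qed.

(* The weighted squares [f^2 exp (-/+ 2 M t)] are monotone. *)
Lemma gronwall T f df M t :
  (forall s, 0 <= s <= T -> der_in 0 T f s (df s)) ->
  (forall s, 0 <= s <= T -> Rabs (df s) <= M * Rabs (f s)) -> 0 <= t <= T ->
  Rabs (f t) <= Rabs (f 0) * exp (M * t) /\ Rabs (f 0) <= Rabs (f t) * exp (M * t).
Proof.
intros Hd Hb Ht.
assert (K : forall s, 0 <= s <= T -> Rabs (2 * f s * df s) <= 2 * M * (f s * f s)).
{ intros s Hs. specialize (Hb s Hs). rewrite !Rabs_mult, (Rabs_pos_eq 2) by lra.
  assert (Rabs (f s) * Rabs (df s) <= Rabs (f s) * (M * Rabs (f s)))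
    by (apply Rmult_le_compat_l; [apply Rabs_pos|auto]).
  replace (2 * M * (f s * f s)) with (2 * (Rabs (f s) * (M * Rabs (f s)))) by (split_Rabs; ring).
  lra. }
set (E := exp (M * t)).
assert (HE : 0 < E) by apply exp_pos.
assert (HE2 : exp (2 * M * t) = E * E) by (unfold E; rewrite <- exp_plus; f_equal; ring).
assert (HE2' : exp (- (2 * M) * t) * (E * E) = 1)
  by (unfold E; rewrite <- !exp_plus, <- exp_0; f_equal; ring).
assert (Habs : Rabs (f 0) * E * (Rabs (f 0) * E) = f 0 * f 0 * (E * E)) by (split_Rabs; ring).
assert (Habs' : Rabs (f t) * E * (Rabs (f t) * E) = f t * f t * (E * E)) by (split_Rabs; ring).
assert (0 <= Rabs (f 0)) by apply Rabs_pos. assert (0 <= Rabs (f t)) by apply Rabs_pos.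
split; apply abs_le_of_sq_le; try nra.
- assert (Decr : 0 - f 0 * f 0 * exp (- (2 * M) * 0) <= 0 - f t * f t * exp (- (2 * M) * t)).
  { apply (der_in_nonneg_incr 0 T (fun s => 0 - f s * f s * exp (- (2 * M) * s))
      (fun s => 0 - exp (- (2 * M) * s) * (2 * f s * df s + - (2 * M) * (f s * f s)))); try lra.
    - intros s Hs. apply der_in_minus; [apply der_in_const|].
      apply der_in_weighted_square, Hd. lra.
    - intros s Hs. specialize (K s ltac:(lra)). apply Rabs_le_between in K.
      assert (0 < exp (- (2 * M) * s)) by apply exp_pos. nra. }
  rewrite Rmult_0_r, exp_0 in Decr. nra.
- assert (Incr : f 0 * f 0 * exp (2 * M * 0) <= f t * f t * exp (2 * M * t)).
  { apply (der_in_nonneg_incr 0 T (fun s => f s * f s * exp (2 * M * s))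
      (fun s => exp (2 * M * s) * (2 * f s * df s + 2 * M * (f s * f s)))); try lra.
    - intros s Hs. apply der_in_weighted_square, Hd. lra.
    - intros s Hs. specialize (K s ltac:(lra)). apply Rabs_le_between in K.
      assert (0 < exp (2 * M * s)) by apply exp_pos. nra. }
  rewrite Rmult_0_r, exp_0, HE2 in Incr. nra.
Qed.

Lemma eq_of_forall_dist_le u v K : (forall e, 0 < e -> Rabs (u - v) <= K * e) -> u = v.
Proof.
intros H. apply NNPP. intro N.
assert (P : 0 < Rabs (u - v)) by (apply Rabs_pos_lt; lra).
assert (HK : 0 <= Rabs K) by apply Rabs_pos. assert (K <= Rabs K) by apply Rle_abs.
set (e := Rabs (u - v) / (2 * (Rabs K + 1))).
assert (He : 0 < e) by (apply Rdiv_lt_0_compat; lra).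
assert (Rabs K * e < Rabs (u - v)).
{ unfold e. apply (Rmult_lt_reg_r (2 * (Rabs K + 1))); [lra|].
  field_simplify; [nra|lra]. }
specialize (H e He). nra.
Qed.

(** * Functions on the rectangle [0, T] x [-PI, PI] *)

Definition cont_rect (T : R) (f : R -> R -> R) : Prop :=
  forall t x, Rect T (t, x) -> forall eps, 0 < eps -> exists d, 0 < d /\
    forall s y, Rect T (s, y) -> Rabs (s - t) < d -> Rabs (y - x) < d ->
      Rabs (f s y - f t x) < eps.

Lemma cont_on2_cont_rect T f : cont_on2 (Rect T) f -> cont_rect T f.
Proof.
intros H t x Htx e He.
destruct (H (t, x) Htx (fun z => Rabs (z - f t x) < e)) as [d Hd].
- exists (mkposreal e He). auto.
- exists d. split; [apply cond_pos|]. intros s y Hsy H1 H2. apply (Hd (s, y)); auto.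
  split; assumption.
Qed.

Lemma cont_rect_slice T f s : cont_rect T f -> 0 <= s <= T -> cont_in (- PI) PI (f s).
Proof.
intros H Hs x Hx e He. destruct (H s x (conj Hs Hx) e He) as [d [Hd Hf]].
exists d. split; auto. intros y Hy Hyd. apply Hf; auto; [split; auto|].
rewrite Rminus_eq_0, Rabs_R0. lra.
Qed.

Lemma cont_rect_unif T f : cont_rect T f -> forall eps, 0 < eps -> exists d, 0 < d /\
  forall s y s' y', Rect T (s, y) -> Rect T (s', y') -> Rabs (s - s') < d -> Rabs (y - y') < d ->
    Rabs (f s y - f s' y') < eps.
Proof.
intros H e He.
assert (G : forall p : R * R, exists d : posreal, Rect T p -> forall s y, Rect T (s, y) ->
    Rabs (s - fst p) < 2 * d -> Rabs (y - snd p) < 2 * d -> Rabs (f s y - f (fst p) (snd p)) < e / 2).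
{ intros [u v]. destruct (classic (Rect T (u, v))) as [Ruv|Ruv].
  - destruct (H u v Ruv (e / 2) ltac:(lra)) as [d [Hd Hf]].
    exists (mkposreal (d / 2) ltac:(lra)). intros _ s y Hsy H1 H2. simpl in H1, H2.
    apply Hf; auto; lra.
  - exists (mkposreal 1 Rlt_0_1). tauto. }
destruct (choice _ G) as [delta Hdelta].
destruct (compactness_value_2d 0 T (- PI) PI (fun u v => delta (u, v))) as [d Hd].
exists d. split; [apply cond_pos|]. intros s y s' y' [Hs Hy] Rs' H1 H2.
apply NNPP. intro NG. apply (Hd s y Hs Hy). intros [u [v [Hu [Hv [Hsu [Hyv Hdd]]]]]].
apply NG. specialize (Hdelta (u, v) (conj Hu Hv)). simpl in Hdelta.
assert (0 < delta (u, v)) by apply cond_pos.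
assert (A1 := Hdelta s y (conj Hs Hy) ltac:(lra) ltac:(lra)).
assert (Rabs (s' - u) < 2 * delta (u, v)).
{ replace (s' - u) with ((s - u) - (s - s')) by ring.
  eapply Rle_lt_trans; [apply Rabs_triang|]. rewrite Rabs_Ropp. lra. }
assert (Rabs (y' - v) < 2 * delta (u, v)).
{ replace (y' - v) with ((y - v) - (y - y')) by ring.
  eapply Rle_lt_trans; [apply Rabs_triang|]. rewrite Rabs_Ropp. lra. }
assert (A2 := Hdelta s' y' Rs' ltac:(lra) ltac:(lra)).
replace (f s y - f s' y') with ((f s y - f u v) - (f s' y' - f u v)) by ring.
eapply Rle_lt_trans; [apply Rabs_triang|]. rewrite Rabs_Ropp. lra.
Qed.

(* Walk from the corner [(0, -PI)] to [(s, y)] in [n] steps shorter than the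
   modulus of uniform continuity for [eps = 1]. *)
Lemma cont_rect_bounded T f : 0 <= T -> cont_rect T f ->
  exists M, forall s y, Rect T (s, y) -> Rabs (f s y) <= M.
Proof.
intros HT H. assert (HPI := PI_RGT_0).
destruct (cont_rect_unif T f H 1 Rlt_0_1) as [d [Hd Hu]].
destruct (INR_unbounded ((T + 2 * PI) / d)) as [n Hn].
assert (Hnd : T + 2 * PI < INR n * d).
{ apply (Rmult_lt_compat_r d) in Hn; auto. unfold Rdiv in Hn.
  rewrite Rmult_assoc, Rinv_l, Rmult_1_r in Hn by lra. lra. }
assert (Hn0 : 0 < INR n) by nra.
exists (Rabs (f 0 (- PI)) + INR n). intros s y [Hs Hy]; simpl in Hs, Hy.
set (p := fun k => INR k / INR n).
assert (Hp : forall k, (k <= n)%nat -> 0 <= p k <= 1).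
{ intros k Hk. apply le_INR in Hk. assert (0 <= INR k) by apply pos_INR. unfold p. split.
  - apply Rdiv_le_0_compat; lra.
  - apply (Rmult_le_reg_r (INR n)); auto. unfold Rdiv. rewrite Rmult_assoc, Rinv_l; lra. }
assert (Step : forall k, (k <= n)%nat ->
  Rabs (f (p k * s) (- PI + p k * (y + PI)) - f 0 (- PI)) <= INR k).
{ induction k as [|k IH]; intros Hk.
  - unfold p. rewrite INR_0. unfold Rdiv. rewrite Rmult_0_l, !Rmult_0_l, Rplus_0_r, Rminus_eq_0, Rabs_R0.
    lra.
  - specialize (IH ltac:(lia)). assert (Hk1 := Hp k ltac:(lia)). assert (Hk2 := Hp (S k) Hk).
    assert (Ep : p (S k) = p k + / INR n) by (unfold p; rewrite S_INR; field; lra).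
    assert (Hinv : 0 < / INR n) by (apply Rinv_0_lt_compat; lra).
    assert (HsT : s * / INR n < d).
    { apply (Rmult_lt_reg_r (INR n)); auto. rewrite Rmult_assoc, Rinv_l; nra. }
    assert (HyT : (y + PI) * / INR n < d).
    { apply (Rmult_lt_reg_r (INR n)); auto. rewrite Rmult_assoc, Rinv_l; nra. }
    assert (Step1 : Rabs (f (p (S k) * s) (- PI + p (S k) * (y + PI)) - f (p k * s) (- PI + p k * (y + PI))) < 1).
    { apply Hu; try (split; simpl; nra); rewrite Ep.
      - replace ((p k + / INR n) * s - p k * s) with (s * / INR n) by ring.
        rewrite Rabs_pos_eq; nra.
      - replace (- PI + (p k + / INR n) * (y + PI) - (- PI + p k * (y + PI))) with ((y + PI) * / INR n)
          by ring. rewrite Rabs_pos_eq; nra. }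
    rewrite S_INR.
    replace (f (p (S k) * s) (- PI + p (S k) * (y + PI)) - f 0 (- PI)) with
      ((f (p (S k) * s) (- PI + p (S k) * (y + PI)) - f (p k * s) (- PI + p k * (y + PI)))
       + (f (p k * s) (- PI + p k * (y + PI)) - f 0 (- PI))) by ring.
    eapply Rle_trans; [apply Rabs_triang|lra]. }
assert (E1 : p n = 1) by (unfold p; field; lra).
specialize (Step n (Nat.le_refl n)). rewrite E1, !Rmult_1_l in Step.
replace (- PI + (y + PI)) with y in Step by ring.
replace (f s y) with ((f s y - f 0 (- PI)) + f 0 (- PI)) by ring.
eapply Rle_trans; [apply Rabs_triang|lra].
Qed.

Definition x_modulus (T : R) (f : R -> R -> R) (k e : R) : Prop :=
  forall s z z', 0 <= s <= T -> - PI <= z <= PI -> - PI <= z' <= PI ->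
    Rabs (z - z') <= k -> Rabs (f s z - f s z') <= e.

Lemma cont_rect_x_modulus T f e : cont_rect T f -> 0 < e ->
  exists d, 0 < d /\ forall k, k < d -> x_modulus T f k e.
Proof.
intros H He. destruct (cont_rect_unif T f H e He) as [d [Hd Hu]].
exists d. split; auto. intros k Hk s z z' Hs Hz Hz' Hzz'. apply Rlt_le, Hu.
- split; auto.
- split; auto.
- rewrite Rminus_eq_0, Rabs_R0. lra.
- lra.
Qed.

Lemma lim_in_cont_rect lo hi T g u v x t0 y0 : cont_rect T g -> Rect T (t0, y0) ->
  (forall r, lo <= r <= hi -> r <> x -> Rect T (u r, v r)) ->
  lim_in lo hi u x t0 -> lim_in lo hi v x y0 ->
  lim_in lo hi (fun r => g (u r) (v r)) x (g t0 y0).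
Proof.
intros Hg R0 Ruv Hu Hv e He.
destruct (Hg t0 y0 R0 e He) as [d [Hd Hgd]].
destruct (Hu d Hd) as [du [Hdu Hu']]. destruct (Hv d Hd) as [dv [Hdv Hv']].
exists (Rmin du dv). split; [apply Rmin_pos; auto|].
intros r Hr Hrx Hrd.
assert (Rmin du dv <= du) by apply Rmin_l. assert (Rmin du dv <= dv) by apply Rmin_r.
apply Hgd; auto; [apply Hu'|apply Hv']; auto; lra.
Qed.

(* The difference quotient of [f] along the curve splits, by two mean value
   theorems, into [ft] at an intermediate time plus [fx] at an intermediate
   point times the difference quotient of [y]; choice turns the intermediate
   points into functions of [r], whose limits are then taken termwise. *)
Lemma der_in_along_curve T f ft fx y dy s : cont_rect T ft -> cont_rect T fx ->
  (forall t x, Rect T (t, x) -> der_in 0 T (fun r => f r x) t (ft t x)) ->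
  (forall t x, Rect T (t, x) -> der_in (- PI) PI (f t) x (fx t x)) ->
  (forall r, 0 <= r <= T -> - PI <= y r <= PI) ->
  0 <= s <= T -> der_in 0 T y s dy ->
  der_in 0 T (fun r => f r (y r)) s (ft s (y s) + dy * fx s (y s)).
Proof.
intros Hft Hfx Dt Dx Hy Hs Dy.
assert (Hys : - PI <= y s <= PI) by auto.
assert (Inc : forall r, exists p : R * R, 0 <= r <= T ->
  Rabs (fst p - s) <= Rabs (r - s) /\ Rabs (snd p - y s) <= Rabs (y r - y s) /\
  Rect T (fst p, y r) /\ Rect T (s, snd p) /\
  f r (y r) - f s (y s) = ft (fst p) (y r) * (r - s) + fx s (snd p) * (y r - y s)).
{ intros r. destruct (classic (0 <= r <= T)) as [Hr|Hr]; [|exists (0, 0); tauto].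
  assert (Hyr : - PI <= y r <= PI) by auto.
  destruct (der_in_MVT 0 T (fun t => f t (y r)) (fun t => ft t (y r)) s r) as [tau [Htau E1]]; auto.
  { intros z Hz. apply Dt. split; auto. apply (between_in 0 T s r z); auto. }
  destruct (der_in_MVT (- PI) PI (f s) (fx s) (y s) (y r)) as [eta [Heta E2]]; auto.
  { intros z Hz. apply Dx. split; auto. apply (between_in (- PI) PI (y s) (y r) z); auto. }
  assert (- PI <= eta <= PI) by (apply (between_in (- PI) PI (y s) (y r) eta); auto).
  assert (0 <= tau <= T) by (apply (between_in 0 T s r tau); auto).
  exists (tau, eta). intros _. simpl in *.
  split; [apply between_dist; auto|]. split; [apply between_dist; auto|].
  split; [split; auto|]. split; [split; auto|]. lra. }
destruct (choice _ Inc) as [p Hp].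
apply (lim_in_ext 0 T (fun r => ft (fst (p r)) (y r) + fx s (snd (p r)) * ((y r - y s) / (r - s)))).
{ intros r Hr Hrs. destruct (Hp r Hr) as (_ & _ & _ & _ & E). rewrite E. field. lra. }
replace (dy * fx s (y s)) with (fx s (y s) * dy) by ring.
assert (Ly : lim_in 0 T y s (y s)) by (apply (der_in_lim 0 T y s dy); auto).
apply lim_in_plus; [|apply lim_in_mult; auto].
- apply (lim_in_cont_rect 0 T T ft); auto.
  + split; auto.
  + intros r Hr _. apply (Hp r Hr).
  + apply (lim_in_dominated 0 T _ (fun r => r) s s s); [|apply lim_in_id].
    intros r Hr _. apply (Hp r Hr).
- apply (lim_in_cont_rect 0 T T fx (fun _ => s)); auto.
  + split; auto.
  + intros r Hr _. apply (Hp r Hr).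
  + apply lim_in_const.
  + apply (lim_in_dominated 0 T _ y s (y s) (y s)); auto.
    intros r Hr _. apply (Hp r Hr).
Qed.

Lemma second_difference_MVT lo1 hi1 lo2 hi2 f f1 f12 t t' x x' :
  lo1 <= t <= hi1 -> lo1 <= t' <= hi1 -> lo2 <= x <= hi2 -> lo2 <= x' <= hi2 ->
  (forall s z, lo1 <= s <= hi1 -> lo2 <= z <= hi2 -> der_in lo1 hi1 (fun r => f r z) s (f1 s z)) ->
  (forall s z, lo1 <= s <= hi1 -> lo2 <= z <= hi2 -> der_in lo2 hi2 (f1 s) z (f12 s z)) ->
  exists s z, Rmin t t' <= s <= Rmax t t' /\ Rmin x x' <= z <= Rmax x x' /\
    f t' x' - f t' x - (f t x' - f t x) = f12 s z * (t' - t) * (x' - x).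
Proof.
intros Ht Ht' Hx Hx' D1 D12.
destruct (der_in_MVT lo1 hi1 (fun r => f r x' - f r x) (fun r => f1 r x' - f1 r x) t t')
  as [s [Hs E1]]; auto.
{ intros z Hz. assert (lo1 <= z <= hi1) by (apply (between_in lo1 hi1 t t' z); auto).
  apply der_in_minus; apply D1; auto. }
destruct (der_in_MVT lo2 hi2 (f1 s) (f12 s) x x') as [z [Hz E2]]; auto.
{ intros w Hw. apply D12; [apply (between_in lo1 hi1 t t' s)|apply (between_in lo2 hi2 x x' w)]; auto. }
exists s, z. repeat split; try tauto. simpl in E1. rewrite E2 in E1. lra.
Qed.

(* Both mixed partials are limits of the normalised second difference. *)
Lemma mixed_partials_eq T f ft fx ftx fxt t x : 0 < T ->
  cont_rect T ftx -> cont_rect T fxt ->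
  (forall t x, Rect T (t, x) -> der_in 0 T (fun r => f r x) t (ft t x)) ->
  (forall t x, Rect T (t, x) -> der_in (- PI) PI (f t) x (fx t x)) ->
  (forall t x, Rect T (t, x) -> der_in (- PI) PI (ft t) x (ftx t x)) ->
  (forall t x, Rect T (t, x) -> der_in 0 T (fun r => fx r x) t (fxt t x)) ->
  Rect T (t, x) -> ftx t x = fxt t x.
Proof.
intros HT C1 C2 Dt Dx Dtx Dxt [Ht Hx]. simpl in Ht, Hx.
assert (HPI := PI_RGT_0).
apply (eq_of_forall_dist_le _ _ 2). intros e He.
destruct (C1 t x (conj Ht Hx) e He) as [d1 [Hd1 C1']].
destruct (C2 t x (conj Ht Hx) e He) as [d2 [Hd2 C2']].
set (d := Rmin d1 d2).
assert (0 < d /\ d <= d1 /\ d <= d2) by (unfold d; repeat split; [apply Rmin_pos|apply Rmin_l|apply Rmin_r]; lra).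
destruct (exists_near_in 0 T t d) as [t' [Ht' [Htt' Htd]]]; try lra.
destruct (exists_near_in (- PI) PI x d) as [x' [Hx' [Hxx' Hxd]]]; try lra.
destruct (second_difference_MVT 0 T (- PI) PI f ft ftx t t' x x') as [s [z [Hs [Hz E1]]]]; auto.
{ intros; apply Dt; split; auto. }
{ intros; apply Dtx; split; auto. }
destruct (second_difference_MVT (- PI) PI 0 T (fun z r => f r z) (fun z r => fx r z) (fun z r => fxt r z) x x' t t')
  as [z' [s' [Hz' [Hs' E2]]]]; auto.
{ intros; apply Dx; split; auto. }
{ intros; apply Dxt; split; auto. }
assert (Eq : ftx s z = fxt s' z').
{ apply (Rmult_eq_reg_r ((t' - t) * (x' - x))).
  - rewrite <- !Rmult_assoc, <- E1. simpl in E2. lra.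
  - apply Rmult_integral_contrapositive. split; lra. }
assert (Rabs (s - t) <= Rabs (t' - t)) by (apply between_dist; auto).
assert (Rabs (z - x) <= Rabs (x' - x)) by (apply between_dist; auto).
assert (Rabs (s' - t) <= Rabs (t' - t)) by (apply between_dist; auto).
assert (Rabs (z' - x) <= Rabs (x' - x)) by (apply between_dist; auto).
assert (A1 : Rabs (ftx s z - ftx t x) < e).
{ apply C1'; try lra. split; [apply (between_in 0 T t t')|apply (between_in (- PI) PI x x')]; auto. }
assert (A2 : Rabs (fxt s' z' - fxt t x) < e).
{ apply C2'; try lra. split; [apply (between_in 0 T t t')|apply (between_in (- PI) PI x x')]; auto. }
rewrite Eq in A1.
replace (ftx t x - fxt t x) with (- (fxt s' z' - ftx t x) + (fxt s' z' - fxt t x)) by ring.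
eapply Rle_trans; [apply Rabs_triang|]. rewrite Rabs_Ropp. lra.
Qed.

(** * Along the characteristic *)

Definition primitive (f : R -> R -> R) (t x : R) : R := RInt (fun y => f t y) (- PI) x.

Section Characteristic.

Variables (T : R) (a at_ ax atx axt axx : R -> R -> R) (xs : R -> R) (x0 Ma Mx : R).

Hypothesis HT : 0 < T.
Hypotheses (Ca : cont_rect T a) (Catx : cont_rect T atx) (Caxt : cont_rect T axt)
  (Caxx : cont_rect T axx).
Hypothesis Dat : forall t x, Rect T (t, x) -> der_in 0 T (fun s => a s x) t (at_ t x).
Hypothesis Dax : forall t x, Rect T (t, x) -> der_in (- PI) PI (a t) x (ax t x).
Hypothesis Datx : forall t x, Rect T (t, x) -> der_in (- PI) PI (at_ t) x (atx t x).
Hypothesis Daxt : forall t x, Rect T (t, x) -> der_in 0 T (fun s => ax s x) t (axt t x).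
Hypothesis Daxx : forall t x, Rect T (t, x) -> der_in (- PI) PI (ax t) x (axx t x).
Hypothesis pde : forall t x, Rect T (t, x) ->
  at_ t x + primitive a t x * ax t x - (a t x) ^ 2
    + / PI * RInt (fun y => (a t y) ^ 2) (- PI) PI = 0.
Hypothesis mean_zero : forall t, 0 <= t <= T -> primitive a t PI = 0.
Hypotheses (x0_in : - PI <= x0 <= PI) (ax_x0 : ax 0 x0 = 0).
Hypotheses (xs_0 : xs 0 = x0) (xs_in : forall t, 0 <= t <= T -> - PI <= xs t <= PI).
Hypothesis xs_der : forall t, 0 <= t <= T -> der_in 0 T xs t (primitive a t (xs t)).
Hypotheses (a_bound : forall s y, Rect T (s, y) -> Rabs (a s y) <= Ma)
  (axx_bound : forall s y, Rect T (s, y) -> Rabs (axx s y) <= Mx).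

Let PI_pos := PI_RGT_0.

Lemma a_bound_nonneg : 0 <= Ma.
Proof.
assert (R00 : Rect T (0, 0)) by (split; simpl; lra).
assert (H := a_bound 0 0 R00). assert (0 <= Rabs (a 0 0)) by apply Rabs_pos. lra.
Qed.

Lemma primitive_dx s y : Rect T (s, y) -> der_in (- PI) PI (primitive a s) y (a s y).
Proof.
intros [Hs Hy]. apply der_in_RInt; auto; [lra|]. apply (cont_rect_slice T); auto.
Qed.

Lemma pde_dx s y : Rect T (s, y) -> atx s y + primitive a s y * axx s y - a s y * ax s y = 0.
Proof.
intros Rsy. assert (Hs := proj1 Rsy). assert (Hy := proj2 Rsy). simpl in Hs, Hy.
set (c := / PI * RInt (fun y => (a s y) ^ 2) (- PI) PI).
set (F := fun z => at_ s z + primitive a s z * ax s z - a s z * a s z + c).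
assert (D : der_in (- PI) PI F y
  (atx s y + (primitive a s y * axx s y + ax s y * a s y)
     - (a s y * ax s y + a s y * ax s y) + 0)).
{ apply der_in_plus; [|apply der_in_const].
  apply der_in_minus; [apply der_in_plus|apply der_in_mult; auto].
  - apply Datx; auto.
  - apply der_in_mult; [apply primitive_dx|apply Daxx]; auto. }
assert (D0 : der_in (- PI) PI F y 0).
{ apply (der_in_ext _ _ (fun _ => 0)); auto; [|apply der_in_const].
  intros z Hz. unfold F, c. rewrite <- (pde s z (conj Hs Hz)). ring. }
assert (E := der_in_unique (- PI) PI F y _ _ ltac:(lra) Hy D D0). lra.
Qed.

Lemma transport_ax s y : Rect T (s, y) -> axt s y + primitive a s y * axx s y = a s y * ax s y.
Proof.
intros Rsy.
rewrite <- (mixed_partials_eq T a at_ ax atx axt s y); auto.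
assert (H := pde_dx s y Rsy). lra.
Qed.

Lemma ax_along_char s : 0 <= s <= T -> ax s (xs s) = 0.
Proof.
intros Hs.
assert (D : forall r, 0 <= r <= T ->
  der_in 0 T (fun r => ax r (xs r)) r (a r (xs r) * ax r (xs r))).
{ intros r Hr. rewrite <- transport_ax by (split; simpl; auto).
  apply (der_in_along_curve T ax axt axx xs); auto. }
destruct (gronwall T (fun r => ax r (xs r)) (fun r => a r (xs r) * ax r (xs r)) Ma s D)
  as [G _]; auto.
{ intros r Hr. rewrite Rabs_mult. apply Rmult_le_compat_r; [apply Rabs_pos|].
  apply a_bound. split; simpl; auto. }
simpl in G. rewrite xs_0, ax_x0, Rabs_R0, Rmult_0_l in G.
apply Rabs_eq_0. assert (0 <= Rabs (ax s (xs s))) by apply Rabs_pos. lra.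
Qed.

(* By zero mean, the velocity [primitive a] vanishes at both ends of
   [-PI, PI], so the distance of the characteristic to either end obeys a
   Gronwall inequality. *)
Lemma char_boundary_dist sg s : sg = 1 \/ sg = -1 -> 0 <= s <= T ->
  (PI - sg * x0) * exp (- (Ma * T)) <= PI - sg * xs s.
Proof.
intros Hsg Hs.
assert (Hdist : forall r, 0 <= r <= T -> 0 <= PI - sg * xs r)
  by (intros r Hr; specialize (xs_in r Hr); destruct Hsg; subst; lra).
assert (D : forall r, 0 <= r <= T -> der_in 0 T (fun r => PI - sg * xs r) r
  (0 - (sg * primitive a r (xs r) + xs r * 0))).
{ intros r Hr. apply der_in_minus; [apply der_in_const|].
  apply (der_in_mult 0 T (fun _ => sg)); [apply der_in_const|auto]. }
destruct (gronwall T _ _ Ma s D) as [_ G]; auto.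
- intros r Hr. rewrite Rmult_0_r, Rplus_0_r, Rminus_0_l, Rabs_Ropp, Rabs_mult.
  assert (Hr' := xs_in r Hr). rewrite (Rabs_pos_eq (PI - sg * xs r)) by auto.
  destruct (RInt_zero_mean_bound (- PI) PI (fun y => a r y) Ma (xs r)) as [B1 B2]; auto.
  + apply (cont_rect_slice T); auto.
  + intros z Hz. apply a_bound. split; simpl; auto.
  + apply mean_zero; auto.
  + fold (primitive a r (xs r)) in B1, B2.
    assert (Hsg1 : Rabs sg = 1) by (destruct Hsg; subst; [apply Rabs_R1|rewrite Rabs_left; lra]).
    rewrite Hsg1, Rmult_1_l. destruct Hsg; subst; lra.
- simpl in G. rewrite xs_0 in G.
  assert (Hx := Hdist s Hs). assert (H0 := Hdist 0 ltac:(lra)). rewrite xs_0 in H0.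
  rewrite (Rabs_pos_eq (PI - sg * x0)), (Rabs_pos_eq (PI - sg * xs s)) in G by auto.
  assert (HMa := a_bound_nonneg).
  assert (exp (- (Ma * T)) * exp (Ma * s) <= 1).
  { assert (E : - (Ma * T) + Ma * s <= 0) by nra. rewrite <- exp_plus, <- exp_0.
    destruct (Rle_lt_or_eq_dec _ _ E) as [L|L]; [left; apply exp_increasing, L|right; now rewrite L]. }
  assert (0 < exp (- (Ma * T))) by apply exp_pos.
  apply (Rmult_le_compat_r (exp (- (Ma * T)))) in G; [|lra]. nra.
Qed.

Lemma char_margin : exists sg rho, (sg = 1 \/ sg = -1) /\ 0 < rho /\
  forall k s, 0 <= k <= rho -> 0 <= s <= T -> - PI <= xs s + sg * k <= PI.
Proof.
assert (0 < exp (- (Ma * T))) by apply exp_pos.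
destruct (Rlt_or_le x0 PI) as [L|L].
- exists 1, ((PI - 1 * x0) * exp (- (Ma * T))). split; [auto|split; [nra|]].
  intros k s Hk Hs. assert (B := char_boundary_dist 1 s ltac:(auto) Hs).
  assert (Hxs := xs_in s Hs). lra.
- exists (-1), ((PI - -1 * x0) * exp (- (Ma * T))). split; [auto|split; [nra|]].
  intros k s Hk Hs. assert (B := char_boundary_dist (-1) s ltac:(auto) Hs).
  assert (Hxs := xs_in s Hs). lra.
Qed.

Section Shift.

Variables (e k h : R).
Hypotheses (k_pos : 0 < k) (h_abs : Rabs h = k).
Hypothesis shift_in : forall s, 0 <= s <= T -> - PI <= xs s + h <= PI.
Hypotheses (a_mod : x_modulus T a k e) (axx_mod : x_modulus T axx k e).

Lemma ax_shift_char s : 0 <= s <= T -> exists eta, - PI <= eta <= PI /\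
  Rabs (eta - xs s) <= k /\ Rabs (eta - (xs s + h)) <= k /\ ax s (xs s + h) = h * axx s eta.
Proof.
intros Hs. assert (Hx := xs_in s Hs). assert (Hy := shift_in s Hs).
destruct (der_in_MVT (- PI) PI (ax s) (axx s) (xs s) (xs s + h)) as [eta [Heta E]]; auto.
{ intros z Hz. apply Daxx. split; simpl; auto. apply (between_in (- PI) PI (xs s) (xs s + h) z); auto. }
rewrite ax_along_char in E by auto.
exists eta. split; [apply (between_in (- PI) PI (xs s) (xs s + h) eta); auto|].
assert (Rabs (eta - xs s) <= Rabs (xs s + h - xs s)) by (apply between_dist; auto).
assert (Rabs (eta - (xs s + h)) <= Rabs (xs s - (xs s + h))).
{ apply between_dist. rewrite Rmin_comm, Rmax_comm. auto. }
replace (xs s + h - xs s) with h in * by ring.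
replace (xs s - (xs s + h)) with (- h) in * by ring. rewrite Rabs_Ropp in *.
split; [lra|split; [lra|]]. lra.
Qed.

(* With [y = xs s + h], the transport identity at [y] and [ax s y = h * axx s eta]
   give [h * (a s y * axx s eta - a s (xs s) * axx s y) - E * axx s y], where
   [E] is the error of the rectangle rule for [primitive a s y - primitive a s (xs s)]. *)
Lemma shifted_ax_deriv_bound s : 0 <= s <= T ->
  Rabs (axt s (xs s + h) + primitive a s (xs s) * axx s (xs s + h)) <= k * e * (2 * Mx + Ma).
Proof.
intros Hs. assert (Hx := xs_in s Hs). assert (Hys := shift_in s Hs).
set (y := xs s + h) in *.
assert (Rs : Rect T (s, y)) by (split; simpl; auto).
assert (Rxs : Rect T (s, xs s)) by (split; simpl; auto).
destruct (ax_shift_char s Hs) as [eta [Heta [He1 [He2 Eeta]]]]. fold y in He2, Eeta.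
assert (Hdy : Rabs (y - xs s) = k) by (unfold y; rewrite <- h_abs; f_equal; ring).
set (E := RInt (a s) (xs s) y - h * a s (xs s)).
assert (HE : Rabs E <= k * e).
{ rewrite <- Hdy. unfold E. replace h with (y - xs s) by (unfold y; ring).
  apply (RInt_sub_const_le (- PI) PI); auto; [lra|apply (cont_rect_slice T); auto|].
  intros z Hz. apply a_mod; auto; [apply (between_in (- PI) PI (xs s) y z); auto|].
  rewrite <- Hdy. apply between_dist; auto. }
assert (Dif : primitive a s y - primitive a s (xs s) = RInt (a s) (xs s) y).
{ apply (RInt_sub_lower (- PI) PI (a s)); auto; [lra|apply (cont_rect_slice T); auto]. }
assert (B1 : Rabs (a s y - a s (xs s)) <= e) by (apply a_mod; auto; lra).
assert (B2 : Rabs (axx s eta - axx s y) <= e) by (apply axx_mod; auto).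
assert (M1 : Rabs (axx s eta) <= Mx) by (apply axx_bound; split; auto).
assert (M2 : Rabs (a s (xs s)) <= Ma) by auto.
assert (M3 : Rabs (axx s y) <= Mx) by auto.
replace (axt s y + primitive a s (xs s) * axx s y) with
  (h * ((a s y - a s (xs s)) * axx s eta + a s (xs s) * (axx s eta - axx s y)) - E * axx s y).
2: { assert (Tr := transport_ax s y Rs). rewrite Eeta in Tr.
     replace (axt s y) with (a s y * (h * axx s eta) - primitive a s y * axx s y) by lra.
     unfold E. rewrite <- Dif. ring. }
set (X := (a s y - a s (xs s)) * axx s eta + a s (xs s) * (axx s eta - axx s y)).
assert (C : Rabs X <= e * Mx + Ma * e).
{ eapply Rle_trans; [apply Rabs_triang|]. apply Rplus_le_compat; apply Rabs_mult_le; auto. }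
assert (C' : Rabs (E * axx s y) <= k * e * Mx) by (apply Rabs_mult_le; auto).
unfold Rminus. eapply Rle_trans; [apply Rabs_triang|]. rewrite Rabs_Ropp, Rabs_mult, h_abs.
assert (k * Rabs X <= k * (e * Mx + Ma * e)) by (apply Rmult_le_compat_l; lra).
lra.
Qed.

(* The mean value theorem in time for [r |-> ax r (xs r + h)], whose values
   at both ends are [h] times [axx] near the characteristic. *)
Lemma axx_char_drift t : 0 <= t <= T ->
  Rabs (axx t (xs t) - axx 0 x0) <= (2 + T * (2 * Mx + Ma)) * e.
Proof.
intros Ht.
assert (D : forall s, 0 <= s <= T -> der_in 0 T (fun r => ax r (xs r + h)) s
  (axt s (xs s + h) + primitive a s (xs s) * axx s (xs s + h))).
{ intros s Hs. replace (primitive a s (xs s)) with (primitive a s (xs s) + 0) by ring.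
  apply (der_in_along_curve T ax axt axx (fun r => xs r + h)); auto.
  apply der_in_plus; [apply xs_der; auto|apply der_in_const]. }
destruct (der_in_MVT 0 T (fun r => ax r (xs r + h))
  (fun s => axt s (xs s + h) + primitive a s (xs s) * axx s (xs s + h)) 0 t)
  as [tau [Htau Et]]; [lra|exact Ht| |].
{ intros z Hz. apply D, (between_in 0 T 0 t z); auto; lra. }
assert (Htau' : 0 <= tau <= T) by (apply (between_in 0 T 0 t tau); auto; lra).
destruct (ax_shift_char t Ht) as [eta1 [H11 [H12 [_ E1]]]].
destruct (ax_shift_char 0 ltac:(lra)) as [eta0 [H01 [H02 [_ E0]]]].
rewrite E1, E0 in Et. rewrite xs_0 in H02.
assert (Bt := shifted_ax_deriv_bound tau Htau').
assert (Hk : Rabs h * Rabs (axx t eta1 - axx 0 eta0) <= k * e * (2 * Mx + Ma) * T).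
{ rewrite <- Rabs_mult.
  replace (h * (axx t eta1 - axx 0 eta0)) with (h * axx t eta1 - h * axx 0 eta0) by ring.
  rewrite Et, Rabs_mult, Rminus_0_r, (Rabs_pos_eq t) by lra.
  apply Rmult_le_compat; [apply Rabs_pos|lra|exact Bt|lra]. }
rewrite h_abs in Hk.
assert (Rabs (axx t eta1 - axx 0 eta0) <= e * (2 * Mx + Ma) * T)
  by (apply (Rmult_le_reg_l k); auto; lra).
assert (A1 : Rabs (axx t eta1 - axx t (xs t)) <= e) by (apply axx_mod; auto).
assert (A0 : Rabs (axx 0 eta0 - axx 0 x0) <= e) by (apply axx_mod; auto; lra).
replace (axx t (xs t) - axx 0 x0) with
  (- (axx t eta1 - axx t (xs t)) + (axx t eta1 - axx 0 eta0) + (axx 0 eta0 - axx 0 x0)) by ring.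
eapply Rle_trans; [apply Rabs_triang|].
eapply Rle_trans; [apply Rplus_le_compat_r, Rabs_triang|].
rewrite Rabs_Ropp. lra.
Qed.

End Shift.

Lemma axx_along_char t : 0 <= t <= T -> axx t (xs t) = axx 0 x0.
Proof.
intros Ht. apply (eq_of_forall_dist_le _ _ (2 + T * (2 * Mx + Ma))). intros e He.
destruct char_margin as [sg [rho [Hsg [Hrho Hmargin]]]].
destruct (cont_rect_x_modulus T a e Ca He) as [da [Hda Hmod_a]].
destruct (cont_rect_x_modulus T axx e Caxx He) as [dx [Hdx Hmod_x]].
set (k := Rmin rho (Rmin da dx) / 2).
assert (0 < k /\ k <= rho /\ k < da /\ k < dx) as (Hk & Hkr & Hka & Hkx).
{ assert (0 < Rmin rho (Rmin da dx)) by (repeat apply Rmin_pos; auto).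
  assert (Rmin rho (Rmin da dx) <= rho) by apply Rmin_l.
  assert (Rmin rho (Rmin da dx) <= Rmin da dx) by apply Rmin_r.
  assert (Rmin da dx <= da) by apply Rmin_l. assert (Rmin da dx <= dx) by apply Rmin_r.
  unfold k. lra. }
apply (axx_char_drift e k (sg * k)); auto.
- rewrite Rabs_mult, (Rabs_pos_eq k) by lra.
  destruct Hsg; subst; [rewrite Rabs_R1|rewrite Rabs_left]; lra.
- intros s Hs. apply Hmargin; auto. lra.
Qed.

End Characteristic.

Theorem lemma2p5 (T : R) (a at_ ax att atx axt axx : R -> R -> R)
  (xs : R -> R) (x0 : R) :
  0 < T ->
  C2_rect T a at_ ax att atx axt axx ->
  (* the PDE on [0,T] x [-pi,pi] *)
  (forall t x, Rect T (t, x) ->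
     at_ t x + RInt (fun y => a t y) (- PI) x * ax t x - (a t x) ^ 2
       + / PI * RInt (fun y => (a t y) ^ 2) (- PI) PI = 0) ->
  (* zero mean *)
  (forall t, 0 <= t <= T -> RInt (fun y => a t y) (- PI) PI = 0) ->
  (* critical point of a_0 *)
  - PI <= x0 <= PI ->
  ax 0 x0 = 0 ->
  (* xs is the characteristic starting from x0 *)
  xs 0 = x0 ->
  (forall t, 0 <= t <= T -> - PI <= xs t <= PI) ->
  (forall t, 0 <= t <= T ->
     is_derive_in (Icc 0 T) xs t (RInt (fun y => a t y) (- PI) (xs t))) ->
  forall t, 0 <= t <= T -> axx t (xs t) = axx 0 x0.
Proof.
intros HT [Ca [_ [_ [_ [Catx [Caxt [Caxx Hder]]]]]]] Hpde Hmean Hx0 Hax0 Hxs0 Hxs Hxsd.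
apply cont_on2_cont_rect in Ca, Catx, Caxt, Caxx.
destruct (cont_rect_bounded T a) as [Ma HMa]; [lra|auto|].
destruct (cont_rect_bounded T axx) as [Mx HMx]; [lra|auto|].
apply (axx_along_char T a at_ ax atx axt axx xs x0 Ma Mx); auto;
  try (intros t x Rtx; apply is_derive_in_der_in, (Hder t x Rtx)).
intros t Ht. apply is_derive_in_der_in, Hxsd, Ht.
Qed.
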